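(* Let $k>0$, let $n$ be a positive integer, $p$ a prime with $p\ge 9n^{2k+2}$, $N$ a positive integer, $T=(n-1)(n-2)/2+2(n-1)$, $v_1,v_2,K,M\in\mathbb{Z}_p^T$, and $D(x)=(2-x)v_1+(x-1)v_2+(x-1)(x-2)(K+xM)$. Let $\mathcal A:\mathbb{Z}_p^T\to\mathbb{Z}_p$ be any function with success probability $q=\mathbb{P}(\mathcal A(\mathbf U)=Z_{n-1}(\mathbf U;p))$ ($\mathbf U$ uniform on $\mathbb{Z}_p^T$) satisfying $q\ge 1/n^k$. Let $\mathcal S=\{(x,\mathcal A(D(x))):x=3,4,\dots,p\}$ and, for $f\in\mathbb{Z}_p[x]$, $G(f)=\{(x,f(x)):x=1,\dots,p\}$. Define $$\mathcal F=\{f\in\mathbb{Z}_p[x]:\deg(f)<n^2,\ |G(f)\cap\mathcal S|\ge (p-2)q/2\}.$$ Then $|\mathcal F|\le 3/q$; in particular $|\mathcal F|\le 3n^k$.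
   Context: Arithmetic is in $\mathbb{Z}_p$, elements of $\{1,\dots,p\}$ viewed as residues mod $p$. For $\boldsymbol\sigma\in\{-1,1\}^m$, $I_m(\boldsymbol\sigma)=|\{(i,j):1\le i<j\le m,\ \sigma_i\ne\sigma_j\}|$, $f(m,\boldsymbol\sigma)=\frac{m(m-1)}2-m-I_m(\boldsymbol\sigma)$; a vector in $\mathbb{Z}_p^{m(m-1)/2+2m}$ is read as $(\mathbf J,\mathbf B,\mathbf C)$ with $J_{ij}$ ($1\le i<j\le m$), $B_i$, $C_i$ ($i\le m$), and $Z_m(\mathbf J,\mathbf B,\mathbf C;p)=\sum_{\boldsymbol\sigma}2^{Nf(m,\boldsymbol\sigma)}\prod_{i:\sigma_i=-1}B_i\prod_{i:\sigma_i=+1}C_i\prod_{i<j:\sigma_i\ne\sigma_j}J_{ij}\pmod p$. *)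

From HB Require Import structures.
From mathcomp Require Import all_boot all_order all_algebra.
From mathcomp Require Import reals exp.
Set Implicit Arguments. Unset Strict Implicit. Unset Printing Implicit Defensive.
Import Order.TTheory GRing.Theory Num.Theory.
Local Open Scope ring_scope.

(* I_m(sigma): sigma : {ffun 'I_m -> bool}, true encodes +1, false encodes -1 *)
Definition Icount (m : nat) (s : {ffun 'I_m -> bool}) : nat :=
  #|[set ij : 'I_m * 'I_m | (ij.1 < ij.2)%N && (s ij.1 != s ij.2)]|.

Definition fexp (m : nat) (s : {ffun 'I_m -> bool}) : int :=
  ((m * (m - 1)) %/ 2)%:Z - m%:Z - (Icount s)%:Z.

Definition Zm (F : fieldType) (m N : nat) (J : 'I_m -> 'I_m -> F) (B C : 'I_m -> F) : F :=
  \sum_(s : {ffun 'I_m -> bool})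
     (2 : F) ^ (N%:Z * fexp s)
     * (\prod_(i : 'I_m | ~~ s i) B i)
     * (\prod_(i : 'I_m | s i) C i)
     * (\prod_(ij : 'I_m * 'I_m | (ij.1 < ij.2)%N && (s ij.1 != s ij.2)) J ij.1 ij.2).

Definition Tdim (m : nat) : nat := (m * (m - 1)) %/ 2 + 2 * m.

(* coordinate access by a natural-number position (0 if out of range) *)
Definition coord (F : fieldType) (T : nat) (v : {ffun 'I_T -> F}) (k : nat) : F :=
  if @insub nat (fun x => (x < T)%N) 'I_T k is Some i then v i else 0.

(* Reading convention (0-based): the J_{ij}, i<j, come first in lexicographic
   order, then B_0..B_{m-1}, then C_0..C_{m-1}. *)
Definition jpos (m i j : nat) : nat := i * m - (i * i.+1) %/ 2 + (j - i - 1).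
Definition bpos (m i : nat) : nat := (m * (m - 1)) %/ 2 + i.
Definition cpos (m i : nat) : nat := (m * (m - 1)) %/ 2 + m + i.

Definition Zvec (F : fieldType) (m N : nat) (v : {ffun 'I_(Tdim m) -> F}) : F :=
  @Zm F m N (fun i j => coord v (jpos m i j))
       (fun i => coord v (bpos m i)) (fun i => coord v (cpos m i)).

Definition Dline (F : fieldType) (T : nat) (v1 v2 K M : {ffun 'I_T -> F}) (x : F)
  : {ffun 'I_T -> F} :=
  [ffun i => (2 - x) * v1 i + (x - 1) * v2 i + (x - 1) * (x - 2) * (K i + x * M i)].

Definition succ_prob (R : realType) (F : finFieldType) (T : nat)
  (A : {ffun 'I_T -> F} -> F) (Z : {ffun 'I_T -> F} -> F) : R :=
  (#|[set u : {ffun 'I_T -> F} | A u == Z u]|)%:R / (#|{: {ffun 'I_T -> F}}|)%:R.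

Definition Sset (p T : nat) (A : {ffun 'I_T -> 'F_p} -> 'F_p) (v1 v2 K M : {ffun 'I_T -> 'F_p})
  : {set 'F_p * 'F_p} :=
  [set ((nat_of_ord x)%:R, A (Dline v1 v2 K M (nat_of_ord x)%:R)) | x : 'I_p.+1 & (3 <= x)%N].

Definition Gset (p : nat) (f : {poly 'F_p}) : {set 'F_p * 'F_p} :=
  [set ((nat_of_ord x)%:R, f.[(nat_of_ord x)%:R]) | x : 'I_p.+1 & (1 <= x)%N].

From HB Require Import structures.
From mathcomp Require Import all_boot all_order all_algebra.
From mathcomp Require Import reals exp.
From mathcomp Require Import zify lra.
Import Order.TTheory GRing.Theory Num.Theory.
Set Implicit Arguments. Unset Strict Implicit. Unset Printing Implicit Defensive.
Local Open Scope ring_scope.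

(* The graphs of two distinct polynomials of degree < n^2 share at most n^2 - 1
   points, while every graph in the family meets S, a set of at most p - 2 points,
   in at least (p - 2) q / 2 of them.  By Bonferroni's inequality m such graphs
   satisfy m (p - 2) q / 2 <= (p - 2) + C(m, 2) (n^2 - 1).  The hypothesis
   p >= 9 n^(2k+2) >= 9 n^2 / q^2 makes this fail as soon as m q first exceeds 3,
   so adding the polynomials one at a time never leaves the range m q <= 3. *)

Lemma family_size_bound_step (R : realFieldType) (P D q m : R) :
  0 < q -> 0 <= D -> 0 <= m -> 9 * D + 7 <= P * q ^+ 2 -> m * q <= 3 ->
  (m + 1) * P * q <= 2 * P + (m + 1) * m * D -> (m + 1) * q <= 3.
Proof.
move=> q0 D0 m0 margin mq_le bonf; rewrite leNgt; apply/negP => mq_gt.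
have bonf_q : (m + 1) * P * q ^+ 2 <= 2 * P * q + 3 * (m + 1) * D.
  have : 0 <= (3 - m * q) * ((m + 1) * D) by apply: mulr_ge0; nra.
  have : (m + 1) * P * q * q <= (2 * P + (m + 1) * m * D) * q by rewrite ler_pM2r.
  rewrite expr2; nra.
have : 0 < ((m + 1) * q - 3) * (P * q ^+ 2 - 3 * D) by apply: mulr_gt0; lra.
nra.
Qed.

Lemma family_margin (R : realFieldType) (a q P D : R) :
  1 <= a -> a^-1 <= q -> 0 <= D ->
  9 * a ^+ 2 * (D + 1) <= P + 2 -> 9 * D + 7 <= P * q ^+ 2.
Proof.
move=> a1 aq D0 HP.
have a0 : 0 < a by lra.
have aq1 : 1 <= a * q by rewrite -(mulfV (lt0r_neq0 a0)) ler_pM2l.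
have P_ge : (9 * D + 7) * a ^+ 2 <= P by nra.
have : (9 * D + 7) * (a * q) ^+ 2 <= P * q ^+ 2 by rewrite exprMn mulrA ler_wpM2r ?sqr_ge0.
have : 9 * D + 7 <= (9 * D + 7) * (a * q) ^+ 2 by rewrite ler_peMr //; nra.
lra.
Qed.

Lemma powR_mul2_add2 (R : realType) (x k : R) : 0 < x ->
  x `^ (2 * k + 2) = (x `^ k) ^+ 2 * x ^+ 2.
Proof.
move=> x0; rewrite powRD ?(gt_eqF x0) ?implybT // (mulrC 2 k) powRrM.
by rewrite !powR_mulrn ?powR_ge0 ?ltW.
Qed.

Section PairwiseIntersections.
Variables (T : finType) (I : eqType) (F : I -> {set T}).

Lemma card_setI_bigcup_le (A : {set T}) (s : seq I) :
  (#|A :&: \bigcup_(i <- s) F i| <= \sum_(i <- s) #|A :&: F i|)%N.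
Proof.
elim: s => [|i s IHs]; first by rewrite !big_nil setI0 cards0.
rewrite !big_cons setIUr; apply: leq_trans (leq_add (leqnn _) IHs).
by rewrite -(cardsUI (A :&: F i)) leq_addr.
Qed.

Lemma bonferroni_pairwise (s : seq I) (d : nat) : uniq s ->
  {in s &, forall i j, i != j -> #|F i :&: F j| <= d}%N ->
  (2 * \sum_(i <- s) #|F i| <= 2 * #|\bigcup_(i <- s) F i| + size s * (size s).-1 * d)%N.
Proof.
elim: s => [|i s IHs] /=; first by rewrite !big_nil.
case/andP=> i_s uniq_s Fd; rewrite !big_cons.
have sub_s := mem_subseq (subseq_cons s i).
have IH := IHs uniq_s (sub_in2 sub_s Fd).
have cap : (#|F i :&: \bigcup_(j <- s) F j| <= size s * d)%N.
  apply: leq_trans (card_setI_bigcup_le _ _) _.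
  rewrite mulnC -iter_addn_0 -count_predT -big_const_seq.
  rewrite big_seq_cond [X in (_ <= X)%N]big_seq_cond.
  apply: leq_sum => j /andP[js _]; apply: Fd; rewrite ?mem_head ?sub_s //.
  by apply: contraNneq i_s => ->.
have := cardsUI (F i) (\bigcup_(j <- s) F j).
case: (size s) IH cap => [|m] /=; nia.
Qed.

Lemma family_size_bound (R : realFieldType) (S : {set T}) (s : seq I) (P q : R) d :
  0 < q -> 9 * d%:R + 7 <= P * q ^+ 2 -> #|S|%:R <= P ->
  uniq s -> {in s, forall i, F i \subset S} ->
  {in s, forall i, P * q / 2 <= #|F i|%:R} ->
  {in s &, forall i j, i != j -> #|F i :&: F j| <= d}%N ->
  (size s)%:R * q <= 3.
Proof.
move=> q0 margin SP; elim: s => [|i s IHs]; first by rewrite mul0r; lra.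
move=> uniq_is subS large small; have sub_s := mem_subseq (subseq_cons s i).
have IH : (size s)%:R * q <= 3.
  apply: IHs; first by case/andP: uniq_is.
  - by move=> j /sub_s; apply: subS.
  - by move=> j /sub_s; apply: large.
  - by move=> j k /sub_s js /sub_s; apply: small.
have union_le : (#|\bigcup_(j <- i :: s) F j|%:R <= P :> R).
  apply: le_trans SP; rewrite ler_nat; apply: subset_leq_card.
  rewrite big_seq; apply: (big_ind (fun X : {set T} => X \subset S)) => //; first exact: sub0set.
  by move=> X Y XS YS; rewrite subUset XS.
have sum_ge : (size (i :: s))%:R * (P * q / 2) <= \sum_(j <- i :: s) (#|F j|%:R : R).
  rewrite mulr_natl -iter_addr_0 -count_predT -big_const_seq big_seq [X in _ <= X]big_seq.
  exact: ler_sum.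
have := bonferroni_pairwise uniq_is small.
rewrite -(ler_nat R) natrD !natrM -natr_sum /= -natr1 in sum_ge *.
have step := family_size_bound_step q0 (ler0n R d) (ler0n R (size s)) margin IH.
by move=> bonf; apply: step; lra.
Qed.

End PairwiseIntersections.

Lemma card_ord_geq n m : #|[set i : 'I_n | (m <= i)%N]| = (n - m)%N.
Proof.
rewrite -sum1_card -[RHS]muln1 -sum_nat_const_nat big_geq_mkord.
by apply: eq_bigl => i; rewrite !inE.
Qed.

Lemma card_Sset p T (A : {ffun 'I_T -> 'F_p} -> 'F_p) v1 v2 K M :
  (#|Sset A v1 v2 K M| <= p - 2)%N.
Proof. by apply: leq_trans (leq_imset_card _ _) _; rewrite card_ord_geq. Qed.

Lemma card_horner_eq_lt (R : finIdomainType) (f g : {poly R}) :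
  f != g -> (#|[set x | f.[x] == g.[x]]| < size (f - g)%R)%N.
Proof.
rewrite -subr_eq0 cardE => fBg; apply: max_poly_roots; rewrite ?enum_uniq //.
by apply/allP => x; rewrite mem_enum inE /root hornerD hornerN subr_eq0.
Qed.

Lemma card_Gset_setI p (f g : {poly 'F_p}) d : f != g ->
  (size f <= d)%N -> (size g <= d)%N -> (#|Gset f :&: Gset g| < d)%N.
Proof.
move=> fg fd gd.
have sub : Gset f :&: Gset g \subset [set (x, f.[x]) | x in [set x | f.[x] == g.[x]]].
  apply/subsetP => _ /setIP[/imsetP[x _ ->] /imsetP[y _ [xy fg_xy]]].
  by apply/imsetP; exists x%:R; rewrite // inE fg_xy xy.
apply: leq_ltn_trans (subset_leq_card sub) _; apply: leq_ltn_trans (leq_imset_card _ _) _.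
apply: leq_trans (card_horner_eq_lt fg) _.
by apply: leq_trans (size_polyD _ _) _; rewrite size_polyN geq_max fd.
Qed.

Theorem lemma4 (R : realType) (k : R) (n p N : nat)
  (v1 v2 K M : {ffun 'I_(Tdim n.-1) -> 'F_p})
  (A : {ffun 'I_(Tdim n.-1) -> 'F_p} -> 'F_p) :
  0 < k -> (0 < n)%N -> prime p ->
  9 * (n%:R `^ (2 * k + 2)) <= (p%:R : R) ->
  (0 < N)%N ->
  let q : R := succ_prob R A (@Zvec _ n.-1 N) in
  (n%:R `^ k)^-1 <= q ->
  let inF (f : {poly 'F_p}) :=
    (size f <= n ^ 2)%N &&
    ((p - 2)%:R * q / 2 <= (#|Gset f :&: Sset A v1 v2 K M|)%:R) in
  forall s : seq {poly 'F_p}, uniq s -> all inF s ->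
    (size s)%:R <= 3 / q /\ (size s)%:R <= 3 * (n%:R `^ k).
Proof.
move=> k0 n0 p_prime p_large _ q q_ge inF s uniq_s /allP inF_s.
have n_gt0 : (0 : R) < n%:R by rewrite ltr0n.
have a1 : 1 <= n%:R `^ k.
  by rewrite -[leLHS](powRr0 n%:R); apply: ler_powR; rewrite ?ler1n // ltW.
have q0 : 0 < q by apply: lt_le_trans q_ge; rewrite invr_gt0; lra.
have margin : 9 * ((n ^ 2).-1)%:R + 7 <= (p - 2)%:R * q ^+ 2.
  apply: family_margin a1 q_ge (ler0n _ _) _.
  rewrite natrB ?prime_gt1 // subrK natr1 prednK ?expn_gt0 ?n0 //.
  by rewrite natrX -mulrA -powR_mul2_add2.
have size_q : (size s)%:R * q <= 3.
  pose S := Sset A v1 v2 K M.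
  apply: (@family_size_bound _ _ (fun f => Gset f :&: S) _ S) q0 margin _ uniq_s _ _ _.
  - by rewrite ler_nat card_Sset.
  - by move=> f _; exact: subsetIr.
  - by move=> f /inF_s /andP[].
  move=> f g /inF_s /andP[sf _] /inF_s /andP[sg _] fg.
  rewrite -ltnS prednK ?expn_gt0 ?n0 //.
  apply: leq_ltn_trans (card_Gset_setI fg sf sg); apply: subset_leq_card.
  by rewrite setIACA setIid subsetIl.
have q_inv : q^-1 <= n%:R `^ k by rewrite -(invrK (n%:R `^ k)) lef_pV2 ?posrE ?invr_gt0; lra.
have size_le : (size s)%:R <= 3 / q by rewrite ler_pdivlMr.
by split => //; apply: le_trans size_le _; apply: ler_wpM2l.
Qed.
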